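(* Let $n\geq 1$. Suppose $\mathbf A\subseteq\mathbf B$ are finite equidistributed measured boolean algebras ($\mathbf A$ a subalgebra of $\mathbf B$ with the restricted measure), $g$ is an automorphism of $\mathbf A$ and $f$ is an automorphism of $\mathbf B$ such that $f|_{\mathbf A}=g^n$. Then there is a finite equidistributed measured boolean algebra $\mathbf C$ containing $\mathbf B$ as a measured subalgebra and an automorphism $h$ of $\mathbf C$ extending $g$ such that $h^n|_{\mathbf B}=f$. The same holds with ''equidistributed'' replaced throughout by ''equidistributed dyadic''.
   Context: A finite boolean algebra equipped with a finitely additive probability measure is equidistributed if all its atoms have the same positive measure, and equidistributed dyadic if it has $2^k$ atoms each of measure $2^{-k}$ for some $k\ge 0$. For equidistributed algebras every automorphism (permutation of atoms) is measure preserving. *)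

From HB Require Import structures.
From mathcomp Require Import all_boot all_order all_algebra.
From mathcomp Require Import reals.
Set Implicit Arguments. Unset Strict Implicit. Unset Printing Implicit Defensive.
Import Order.TTheory GRing.Theory Num.Theory.
Local Open Scope ring_scope.

(* A finite boolean algebra is represented as the powerset algebra {set T}
   of a finite type T (every finite boolean algebra is of this form). *)

Definition is_atom (T : finType) (a : {set T}) : bool :=
  (a != set0) && [forall b : {set T}, (b \subset a) ==> ((b == set0) || (b == a))].

Definition fa_prob (R : realType) (T : finType) (mu : {set T} -> R) : Prop :=
  [/\ forall x, 0 <= mu x,
      mu setT = 1 &
      forall x y, x :&: y = set0 -> mu (x :|: y) = mu x + mu y].

Definition equidistributed (R : realType) (T : finType) (mu : {set T} -> R) : Prop :=
  exists c : R, 0 < c /\ forall a, is_atom a -> mu a = c.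

Definition equidistributed_dyadic (R : realType) (T : finType) (mu : {set T} -> R)
  : Prop :=
  exists k : nat, #|[set a : {set T} | is_atom a]| = (2 ^ k)%N /\
    forall a, is_atom a -> mu a = (2%:R ^+ k)^-1.

Definition equi (dy : bool) (R : realType) (T : finType) (mu : {set T} -> R) : Prop :=
  if dy then equidistributed_dyadic mu else equidistributed mu.

Definition is_bhom (T1 T2 : finType) (phi : {set T1} -> {set T2}) : Prop :=
  [/\ phi set0 = set0, phi setT = setT,
      forall x y, phi (x :|: y) = phi x :|: phi y,
      forall x y, phi (x :&: y) = phi x :&: phi y &
      forall x, phi (~: x) = ~: phi x].

Definition is_bauto (T : finType) (g : {set T} -> {set T}) : Prop :=
  is_bhom g /\ bijective g.

Definition measured_embedding (R : realType) (T1 T2 : finType)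
  (mu1 : {set T1} -> R) (mu2 : {set T2} -> R) (iota : {set T1} -> {set T2}) : Prop :=
  [/\ is_bhom iota, injective iota & forall x, mu2 (iota x) = mu1 x].

From HB Require Import structures.
From mathcomp Require Import all_boot all_order all_algebra.
From mathcomp Require Import reals.
From Stdlib Require Import FunctionalExtensionality.
Set Implicit Arguments. Unset Strict Implicit. Unset Printing Implicit Defensive.
Import Order.TTheory GRing.Theory Num.Theory.
Local Open Scope ring_scope.

(* Everything is dual to points: a finite equidistributed algebra is {set T}
   with the uniform measure, an automorphism is the image map of a permutation
   of T, and a measured embedding {set TA} -> {set TB} is the preimage map of a
   map alpha : TB -> TA whose fibres all have the same size s.  With
   f = fp @: _, g = gp @: _ and alpha \o fp = gp^n \o alpha, the points of C are
   the words x_0 ... x_(n-1) over TB with alpha x_i = gp^i (alpha x_0), h is the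
   shift x_0 ... x_(n-1) |-> x_1 ... x_(n-1) (fp x_0), and B is pulled back
   along x |-> x_0.  Then h^n applies fp letterwise, h lies over gp, and each
   x_0 has exactly s^(n-1) continuations, so the uniform measure on C restricts
   to the one on B; in the dyadic case s, hence #|C|, is a power of 2. *)

Lemma set1_neq0 (T : finType) (x : T) : [set x] != set0.
Proof. by apply/set0Pn; exists x; rewrite inE. Qed.

Lemma is_atom_set1 (T : finType) (x : T) : is_atom [set x].
Proof.
apply/andP; split; first exact: set1_neq0.
by apply/forallP => b; apply/implyP; rewrite subset1 orbC.
Qed.

Lemma is_atomP (T : finType) (a : {set T}) : is_atom a -> exists x, a = [set x].
Proof.
case/andP => /set0Pn [x xa] /forallP /(_ [set x]).
rewrite sub1set xa /= => /orP [|/eqP <-]; last by exists x.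
by move/eqP/setP/(_ x); rewrite in_set1 in_set0 eqxx.
Qed.

Lemma card_atoms (T : finType) : #|[set a : {set T} | is_atom a]| = #|T|.
Proof.
have -> : [set a : {set T} | is_atom a] = [set [set x] | x in [set: T]].
  apply/setP => a; rewrite inE; apply/idP/imsetP.
    by move/is_atomP => [x ->]; exists x; rewrite ?inE.
  by move=> [x _ ->]; apply: is_atom_set1.
by rewrite card_imset ?cardsT //; apply: set1_inj.
Qed.

Definition unif (R : realType) (T : finType) (S : {set T}) : R :=
  #|S|%:R / #|T|%:R.
Arguments unif {R T} S.

Section UniformMeasure.
Variables (R : realType) (T : finType).
Implicit Types (mu : {set T} -> R) (S : {set T}).

Lemma fa_prob_set0 mu : fa_prob mu -> mu set0 = 0.
Proof.
case=> _ _ add_mu; have := add_mu set0 set0; rewrite setI0 setU0 => /(_ erefl).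
by move/(congr1 (fun z => z - mu set0)); rewrite subrr addrK.
Qed.

Lemma fa_prob_card_gt0 mu : fa_prob mu -> (0 < #|T|)%N.
Proof.
move=> mu_prob; have [_ muT _] := mu_prob.
rewrite lt0n -cardsT cards_eq0; apply: contra_neq (oner_neq0 R) => T0.
by rewrite -muT T0 fa_prob_set0.
Qed.

Lemma fa_prob_card mu c :
  fa_prob mu -> (forall t, mu [set t] = c) -> forall S, mu S = #|S|%:R * c.
Proof.
move=> mu_prob mu1 S; have [_ _ add_mu] := mu_prob.
have [k] := ubnP #|S|; elim: k S => // k IH S; rewrite ltnS => S_le.
have [->|[x xS]] := set_0Vmem S; first by rewrite fa_prob_set0 // cards0 mul0r.
have card_S : #|S| = #|S :\ x|.+1 by rewrite (cardsD1 x) xS.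
rewrite -(setD1K xS) add_mu; last first.
  by apply/setP => y; rewrite !inE; case: eqP => // ->; rewrite eqxx.
rewrite mu1 IH; last by rewrite -ltnS -card_S.
by rewrite setD1K // card_S -addn1 natrD mulrDl mul1r addrC.
Qed.

Lemma fa_prob_equi_unif (dy : bool) mu : fa_prob mu -> equi dy mu -> mu = unif.
Proof.
move=> mu_prob mu_equi.
have [c mu1] : exists c, forall t, mu [set t] = c.
  case: dy mu_equi => [[k [_ mu_atom]] | [c [_ mu_atom]]].
    by exists (2%:R ^+ k)^-1 => t; apply/mu_atom/is_atom_set1.
  by exists c => t; apply/mu_atom/is_atom_set1.
have muE := fa_prob_card mu_prob mu1.
have T_neq0 : (#|T|%:R : R) != 0 by rewrite pnatr_eq0 -lt0n (fa_prob_card_gt0 mu_prob).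
have cE : c = #|T|%:R^-1.
  by apply: (mulfI T_neq0); rewrite divff // -cardsT -muE; case: mu_prob.
by apply: functional_extensionality => S; rewrite muE cE.
Qed.

Lemma unif_fa_prob : (0 < #|T|)%N -> fa_prob (@unif R T).
Proof.
rewrite lt0n -(pnatr_eq0 R) => T_neq0; split => [S||S S' disj].
- by rewrite /unif divr_ge0.
- by rewrite /unif cardsT divff.
- by rewrite /unif cardsU disj cards0 subn0 natrD mulrDl.
Qed.

Lemma unif_equi (dy : bool) :
  (0 < #|T|)%N -> (dy -> exists k, #|T| = (2 ^ k)%N) -> equi dy (@unif R T).
Proof.
move=> T_gt0; case: dy => [/(_ erefl) [k Tk] | _] /=.
  exists k; split; first by rewrite card_atoms.
  by move=> a /is_atomP [x ->]; rewrite /unif cards1 mul1r Tk natrX.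
exists #|T|%:R^-1; split; first by rewrite invr_gt0 ltr0n.
by move=> a /is_atomP [x ->]; rewrite /unif cards1 mul1r.
Qed.

Lemma equidistributed_dyadic_card mu :
  equidistributed_dyadic mu -> exists k, #|T| = (2 ^ k)%N.
Proof. by case=> k [atomsT _]; exists k; rewrite -card_atoms. Qed.

End UniformMeasure.

Lemma bhom_bigcup (T1 T2 : finType) (phi : {set T1} -> {set T2}) (S : {set T1}) :
  is_bhom phi -> phi S = \bigcup_(a in S) phi [set a].
Proof.
case=> phi0 _ phiU _ _; rewrite -(big_morph phi phiU phi0); congr phi.
apply/setP => x; apply/idP/bigcupP => [xS | [a aS]]; first by exists x; rewrite ?inE.
by rewrite inE => /eqP ->.
Qed.

Lemma imset_bauto (T : finType) (p : T -> T) :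
  injective p -> is_bauto (fun S : {set T} => p @: S).
Proof.
move=> p_inj; have [q pK qK] := injF_bij p_inj.
have memp (S : {set T}) z : (p z \in p @: S) = (z \in S) by rewrite mem_imset.
have memq (S : {set T}) z : (q z \in q @: S) = (z \in S) by rewrite mem_imset //; apply: can_inj qK.
split; first split.
- by rewrite imset0.
- by apply/setP => y; rewrite -[y]qK memp !inE.
- by move=> x y; apply/setP => w; rewrite -[w]qK memp !in_setU !memp.
- by move=> x y; apply/setP => w; rewrite -[w]qK memp !in_setI !memp.
- by move=> x; apply/setP => w; rewrite -[w]qK memp !in_setC !memp.
exists (fun S : {set T} => q @: S) => S; apply/setP => w.
  by rewrite -{1}(pK w) memq memp.
by rewrite -{1}(qK w) memp memq.
Qed.

Lemma bautoP (T : finType) (f : {set T} -> {set T}) :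
  is_bauto f -> exists2 p : T -> T, injective p & f = fun S => p @: S.
Proof.
case=> f_hom [finv fK Kf]; have [f0 _ _ fI _] := f_hom.
have f_set1 b : exists x, f [set b] == [set x].
  suff /is_atomP [x ->] : is_atom (f [set b]) by exists x.
  apply/andP; split.
    apply: contra_neq (set1_neq0 b) => fb0.
    by rewrite -(fK [set b]) fb0 -f0 fK.
  apply/forallP => c; apply/implyP => c_sub.
  have <- : f (finv c :&: [set b]) = c by rewrite fI Kf; apply/setIidPl.
  by have := subsetIr (finv c) [set b]; rewrite subset1 => /orP [] /eqP ->;
    rewrite ?f0 eqxx ?orbT.
pose p b := xchoose (f_set1 b).
have fp b : f [set b] = [set p b] by apply/eqP/(xchooseP (f_set1 b)).
exists p.
  by move=> b b' e; apply/set1_inj; rewrite -(fK [set b]) -(fK [set b']) !fp e.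
apply: functional_extensionality => S; rewrite (bhom_bigcup S f_hom).
apply/setP => y; apply/bigcupP/imsetP => [[a aS] | [a aS ->]].
  by rewrite fp in_set1 => /eqP ->; exists a.
by exists a; rewrite ?fp ?in_set1.
Qed.

Lemma preimset_bhom (T1 T2 : finType) (pi : T2 -> T1) :
  is_bhom (fun S : {set T1} => pi @^-1: S).
Proof.
by split; [exact: preimset0 | exact: preimsetT | exact: preimsetU
         | exact: preimsetI | exact: preimsetC].
Qed.

Lemma preimset_inj (T1 T2 : finType) (pi : T2 -> T1) :
  (forall a, exists b, pi b = a) -> injective (fun S : {set T1} => pi @^-1: S).
Proof.
move=> pi_surj S S' /setP eqS; apply/setP => a; have [b <-] := pi_surj a.
by have := eqS b; rewrite !inE.
Qed.

Lemma bhomP (T1 T2 : finType) (phi : {set T1} -> {set T2}) :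
  is_bhom phi -> exists alpha : T2 -> T1, phi = fun S => alpha @^-1: S.
Proof.
move=> phi_hom; have [phi0 phiT _ phiI _] := phi_hom.
have phi_cover b : exists a, b \in phi [set a].
  have : b \in phi setT by rewrite phiT inE.
  by rewrite (bhom_bigcup _ phi_hom) => /bigcupP [a _ ?]; exists a.
pose alpha b := xchoose (phi_cover b).
have alphaP b : b \in phi [set alpha b] := xchooseP (phi_cover b).
have alpha_uniq b a : b \in phi [set a] -> alpha b = a.
  move=> ba; apply/eqP; apply: contraT => neq_a.
  have : b \in phi ([set a] :&: [set alpha b]) by rewrite phiI inE ba alphaP.
  suff -> : [set a] :&: [set alpha b] = set0 by rewrite phi0 inE.
  apply/setP => x; rewrite !inE; apply: contraNF neq_a => /andP [/eqP ->].
  by rewrite eq_sym.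
exists alpha; apply: functional_extensionality => S; apply/setP => b.
rewrite inE (bhom_bigcup _ phi_hom); apply/bigcupP/idP => [[a aS /alpha_uniq ->] //|].
by exists (alpha b).
Qed.

Lemma iter_imset (T : finType) (p : T -> T) k (S : {set T}) :
  iter k (fun S : {set T} => p @: S) S = iter k p @: S.
Proof.
elim: k => [|k IH] /=; first by rewrite imset_id.
by rewrite IH -imset_comp.
Qed.

Lemma imset_preimset_commute (T1 T2 : finType) (alpha : T2 -> T1) p q :
  (forall S : {set T1}, p @: (alpha @^-1: S) = alpha @^-1: (q @: S)) ->
  forall b, alpha (p b) = q (alpha b).
Proof.
move=> pq b; have : p b \in p @: (alpha @^-1: [set alpha b]) by rewrite imset_f ?inE.
by rewrite pq imset_set1 !inE => /eqP.
Qed.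

Lemma card_fiber_unif (R : realType) (T1 T2 : finType) (alpha : T2 -> T1) :
  (0 < #|T1|)%N -> (0 < #|T2|)%N ->
  (forall S : {set T1}, unif (alpha @^-1: S) = unif S :> R) ->
  forall a, (#|alpha @^-1: [set a]| * #|T1| = #|T2|)%N.
Proof.
move=> T1_gt0 T2_gt0 alpha_mu a; apply/eqP; rewrite -(eqr_nat R) natrM.
move: (alpha_mu [set a]); rewrite /unif cards1 => /eqP.
by rewrite eqr_div ?pnatr_eq0 -?lt0n // mul1r.
Qed.

Lemma measured_embedding_unif (R : realType) (T1 T2 : finType) (pi : T2 -> T1) k :
  (0 < k)%N -> (forall S : {set T1}, #|pi @^-1: S| = #|S| * k)%N ->
  measured_embedding (@unif R T1) unif (fun S => pi @^-1: S).
Proof.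
move=> k_gt0 card_pi.
have k_neq0 : (k%:R : R) != 0 by rewrite pnatr_eq0 -lt0n.
split; first exact: preimset_bhom.
  apply: preimset_inj => a; have : (0 < #|pi @^-1: [set a]|)%N.
    by rewrite card_pi cards1 mul1n.
  by case/card_gt0P => b; rewrite !inE => /eqP <-; exists b.
move=> S; rewrite /unif card_pi -[#|T2|]cardsT -(preimsetT pi) card_pi cardsT !natrM.
by rewrite -mulf_div divff ?mulr1.
Qed.

Lemma exp2_cofactor (s ka kb : nat) : (s * 2 ^ ka = 2 ^ kb)%N -> exists i, s = (2 ^ i)%N.
Proof.
move=> e; have : (s %| 2 ^ kb)%N by rewrite -e dvdn_mulr.
by case/(dvdn_pfactor _ _ (isT : prime 2)) => i _ ->; exists i.
Qed.

Local Close Scope ring_scope.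

Section ShiftSpace.
Variables (TA TB : finType) (m : nat) (gp : TA -> TA) (fp : TB -> TB) (alpha : TB -> TA).
Hypotheses (gp_inj : injective gp) (fp_inj : injective fp).
Hypothesis alpha_fp : forall b, alpha (fp b) = iter m.+1 gp (alpha b).

(* The word x is the first period of the sequence k |-> unroll x k, in which
   position k + m.+1 holds fp of position k. *)
Definition unroll (x : {ffun 'I_m.+1 -> TB}) k :=
  iter (k %/ m.+1) fp (x (inord (k %% m.+1))).

Definition shift x := [ffun i : 'I_m.+1 => unroll x i.+1].

Definition coherent (x : {ffun 'I_m.+1 -> TB}) :=
  [forall i : 'I_m.+1, alpha (x i) == iter i gp (alpha (x ord0))].

Lemma unroll_ord x (i : 'I_m.+1) : unroll x i = x i.
Proof. by rewrite /unroll divn_small ?modn_small ?inord_val. Qed.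

Lemma iter_unroll x q k : iter q fp (unroll x k) = unroll x (q * m.+1 + k).
Proof. by rewrite /unroll divnMDl // modnMDl iterD. Qed.

Lemma unroll_shift x k : unroll (shift x) k = unroll x k.+1.
Proof.
by rewrite {1}/unroll ffunE inordK ?ltn_pmod // iter_unroll addnS -divn_eq.
Qed.

Lemma unroll_iter_shift x k i : unroll (iter k shift x) i = unroll x (i + k).
Proof. by elim: k i => [|k IH] i; rewrite ?addn0 //= unroll_shift IH addnS. Qed.

Lemma iter_shift_period x : iter m.+1 shift x = [ffun i => fp (x i)].
Proof.
apply/ffunP => i; rewrite -unroll_ord unroll_iter_shift ffunE -unroll_ord.
by rewrite -[fp _]/(iter 1 fp _) iter_unroll mul1n addnC.
Qed.

Lemma shift_inj : injective shift.
Proof.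
move=> x y /(congr1 (fun z => unroll z)) eq_shift.
have eqS k : unroll x k.+1 = unroll y k.+1 by rewrite -!unroll_shift eq_shift.
have unroll0 z : fp (unroll z 0) = unroll z m.+1.
  by rewrite -[fp _]/(iter 1 fp _) iter_unroll mul1n addn0.
apply/ffunP => i; rewrite -!unroll_ord; case: (nat_of_ord i) => [|k] //.
by apply: fp_inj; rewrite !unroll0 eqS.
Qed.

Lemma alpha_iter_fp q b : alpha (iter q fp b) = iter (q * m.+1) gp (alpha b).
Proof. by elim: q => [|q IH] //; rewrite mulSn iterD -IH -alpha_fp. Qed.

Lemma alpha_unroll x : coherent x -> forall k, alpha (unroll x k) = iter k gp (alpha (x ord0)).
Proof.
move=> /forallP x_coh k; rewrite /unroll alpha_iter_fp (eqP (x_coh _)).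
by rewrite inordK ?ltn_pmod // -iterD -divn_eq.
Qed.

Lemma coherent_shift x : coherent x -> coherent (shift x).
Proof. by move=> x_coh; apply/forallP => i; rewrite !ffunE !alpha_unroll // -iterSr. Qed.

Local Notation C := {x : {ffun 'I_m.+1 -> TB} | coherent x}.

Definition shiftC (x : C) : C := Sub (shift (val x)) (coherent_shift (valP x)).

Definition head (x : C) : TB := val x ord0.

Lemma shiftC_inj : injective shiftC.
Proof. by move=> x y /(congr1 val); rewrite !SubK => /shift_inj/val_inj. Qed.

Lemma shiftC_lift (S : {set TA}) :
  shiftC @: (head @^-1: (alpha @^-1: S)) = head @^-1: (alpha @^-1: (gp @: S)).
Proof.
have [unshift _ unshiftK] := injF_bij shiftC_inj.
apply/setP => y; rewrite -[y]unshiftK mem_imset; last exact: shiftC_inj.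
by rewrite !inE /head SubK ffunE (alpha_unroll (valP _)) mem_imset.
Qed.

Lemma iter_shiftC_head (S : {set TB}) :
  iter m.+1 (fun S : {set C} => shiftC @: S) (head @^-1: S) = head @^-1: (fp @: S).
Proof.
have iter_shiftC_inj k : injective (iter k shiftC).
  by elim: k => [|k IH] //= x y /shiftC_inj/IH.
have val_iter_shiftC k z : val (iter k shiftC z) = iter k shift (val z).
  by elim: k => [|k IH] //=; rewrite -IH.
have [unshift _ unshiftK] := injF_bij (iter_shiftC_inj m.+1).
rewrite iter_imset; apply/setP => y; rewrite -[y]unshiftK mem_imset // !inE.
by rewrite /head val_iter_shiftC iter_shift_period ffunE mem_imset.
Qed.

Variable s : nat.
Hypothesis card_fiber : forall a, #|alpha @^-1: [set a]| = s.

Lemma card_head_fiber b : #|[set x : C | head x == b]| = s ^ m.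
Proof.
pose F (i : 'I_m.+1) :=
  [pred z | if i == ord0 then z == b else alpha z == iter i gp (alpha b)].
have -> : #|[set x : C | head x == b]| = #|[set y in family F]|.
  rewrite -(card_imset _ val_inj); apply: eq_card => y; rewrite inE.
  apply/imsetP/familyP => [[x] | y_fam].
    rewrite inE /head => /eqP x0 -> i; rewrite inE -x0.
    by case: eqP => [->|_]; [rewrite eqxx | exact: (forallP (valP x) i)].
  have /eqP y0 : y ord0 == b by have := y_fam ord0; rewrite inE eqxx.
  have y_coh : coherent y.
    apply/forallP => i; rewrite y0; have := y_fam i; rewrite inE.
    by case: eqP => [->|_]; rewrite ?y0.
  by exists (Sub y y_coh); rewrite // inE /head SubK y0.
rewrite cardsE card_family foldrE big_map big_enum /= big_ord_recl.
have -> : #|F ord0| = 1 by rewrite -(card1 b); apply: eq_card => z; rewrite !inE eqxx.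
rewrite mul1n (eq_bigr (fun _ => s)) ?prod_nat_const ?card_ord // => i _.
rewrite -(card_fiber (iter (lift ord0 i) gp (alpha b))); apply: eq_card => z.
by rewrite !inE unfold_in.
Qed.

Lemma card_head_preimset (S : {set TB}) : #|head @^-1: S| = #|S| * s ^ m.
Proof.
rewrite -sum1_card (partition_big head (mem S)) => [|x]; last by rewrite inE.
rewrite -sum_nat_const; apply: eq_bigr => b bS; rewrite -(card_head_fiber b) sum1_card.
by apply: eq_card => x; rewrite unfold_in !inE andb_idl // => /eqP ->.
Qed.

Lemma card_shift_space : #|{: C}| = #|TB| * s ^ m.
Proof. by have := card_head_preimset setT; rewrite preimsetT !cardsT. Qed.

End ShiftSpace.

Arguments head {TA TB m gp alpha} x.

Local Open Scope ring_scope.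

Theorem mainTheorem5 (dy : bool) (R : realType) (n : nat) (hn : (1 <= n)%N)
  (TA TB : finType) (muA : {set TA} -> R) (muB : {set TB} -> R)
  (iota : {set TA} -> {set TB}) (g : {set TA} -> {set TA}) (f : {set TB} -> {set TB}) :
  fa_prob muA -> equi dy muA ->
  fa_prob muB -> equi dy muB ->
  measured_embedding muA muB iota ->
  is_bauto g -> is_bauto f ->
  (forall x, f (iota x) = iota (iter n g x)) ->
  exists (TC : finType) (muC : {set TC} -> R)
         (j : {set TB} -> {set TC}) (h : {set TC} -> {set TC}),
    [/\ fa_prob muC /\ equi dy muC,
        measured_embedding muB muC j,
        is_bauto h,
        (forall x, h (j (iota x)) = j (iota (g x))) &
        (forall y, iter n h (j y) = j (f y))].
Proof.
case: n hn => // m _ muA_prob muA_equi muB_prob muB_equi.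
have TA_gt0 := fa_prob_card_gt0 muA_prob; have TB_gt0 := fa_prob_card_gt0 muB_prob.
rewrite (fa_prob_equi_unif muA_prob muA_equi) (fa_prob_equi_unif muB_prob muB_equi).
move=> [iota_hom _ iota_unif] /bautoP [gp gp_inj ->] /bautoP [fp fp_inj ->].
have [alpha iotaE] := bhomP iota_hom; subst iota => fg.
have alpha_fp : forall b, alpha (fp b) = iter m.+1 gp (alpha b).
  by apply: imset_preimset_commute => S; rewrite -iter_imset; apply: fg.
have fiber_mul := card_fiber_unif TA_gt0 TB_gt0 iota_unif.
pose s := (#|TB| %/ #|TA|)%N.
have fiber a : #|alpha @^-1: [set a]| = s by rewrite /s -(fiber_mul a) mulnK.
have [a0 _] := card_gt0P TA_gt0.
have TB_eq : (s * #|TA| = #|TB|)%N by rewrite -(fiber a0) fiber_mul.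
have s_gt0 : (0 < s)%N by move: TB_gt0; rewrite -TB_eq muln_gt0 => /andP [].
have card_C := card_shift_space m gp fiber.
have C_gt0 : (0 < #|{: {x : {ffun 'I_m.+1 -> TB} | coherent gp alpha x}}|)%N.
  by rewrite card_C muln_gt0 TB_gt0 expn_gt0 s_gt0.
exists {x : {ffun 'I_m.+1 -> TB} | coherent gp alpha x}, unif,
  (fun S : {set TB} => head @^-1: S), (fun S : {set _} => shiftC alpha_fp @: S); split.
- split; first exact: unif_fa_prob.
  apply: unif_equi => // dy_true; move: muA_equi muB_equi; rewrite dy_true.
  move=> /equidistributed_dyadic_card [kA TAk] /equidistributed_dyadic_card [kB TBk].
  have [i s_exp] : exists i, s = (2 ^ i)%N by apply: (@exp2_cofactor _ kA kB); rewrite -TAk -TBk.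
  by exists (kB + i * m)%N; rewrite card_C TBk s_exp -expnM -expnD.
- by apply: measured_embedding_unif (card_head_preimset m gp fiber); rewrite expn_gt0 s_gt0.
- exact/imset_bauto/shiftC_inj.
- by move=> x /=; apply: shiftC_lift.
- by move=> y; apply: iter_shiftC_head.
Qed.
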